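(* Let $Z_3(X)=\phi_3X^3+\phi_2X^2+\phi_1X+\phi_0$ be a real polynomial of degree $3$ with $\phi_3>0$ all of whose roots have strictly negative real part, and let $Z_4(X)=\varphi_4X^4+\varphi_3X^3+\varphi_2X^2+\varphi_1X+\varphi_0$ be a real polynomial of degree $4$ with $\varphi_4>0$. Then there exists $\psi_0$ such that for every $\psi>\psi_0$, all roots of the polynomial $Z_4(X)+\psi Z_3(X)$ have strictly negative real part.
   Context: A polynomial is called stable if all its (complex) roots have strictly negative real part. *)

From mathcomp Require Import all_boot all_order all_algebra.
From mathcomp Require Import reals.
From mathcomp.real_closed Require Import complex.
Set Implicit Arguments. Unset Strict Implicit. Unset Printing Implicit Defensive.
Import Order.TTheory GRing.Theory Num.Theory.
Local Open Scope ring_scope.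

Definition stable (R : realType) (p : {poly R}) : Prop :=
  forall z : R[i], root (map_poly (real_complex R) p) z -> complex.Re z < 0.

(* Divide q by p: q = (a X + b) p + rho with a > 0 and deg rho < deg p.  If
   q + psi p vanished at some z with Re z >= 0, then
   (a z + b + psi) p(z) = - rho(z).  On the closed right half-plane,
   |a z + b + psi| >= b + psi, and since every root r of p has Re r < 0,
   |z - r| >= c_r (1 + |z|), whence |p(z)| >= c (1 + |z|)^(deg p); on the other
   side |rho(z)| <= K (1 + |z|)^(deg p - 1).  So (b + psi) c <= K, which fails
   for psi large. *)

From mathcomp Require Import all_boot all_order all_algebra.
From mathcomp Require Import reals.
From mathcomp.real_closed Require Import complex.
From mathcomp Require Import ring lra zify.
Import Order.TTheory GRing.Theory Num.Theory.
Set Implicit Arguments. Unset Strict Implicit. Unset Printing Implicit Defensive.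

Local Notation normc := (@Normc.normc _).
Local Open Scope ring_scope.
Local Open Scope complex_scope.

Lemma normr_horner_le (D : numDomainType) n (p : {poly D}) (z : D) :
  (size p <= n.+1)%N -> `|p.[z]| <= (\sum_(i < n.+1) `|p`_i|) * (1 + `|z|) ^+ n.
Proof.
move=> sp; rewrite (horner_coef_wide z sp) mulr_suml.
apply: le_trans (ler_norm_sum _ _ _) _; apply: ler_sum => i _.
rewrite normrM normrX ler_wpM2l //.
have z1 : `|z| <= 1 + `|z| by rewrite lerDr.
apply: le_trans (lerXn2r i _ _ z1) _; rewrite ?nnegrE ?addr_ge0 //.
by rewrite ler_weXn2l ?lerDl // -ltnS.
Qed.

Lemma lead_coef_divp_mul (F : fieldType) (p q : {poly F}) :
  p != 0 -> (size p <= size q)%N -> lead_coef (q %/ p) * lead_coef p = lead_coef q.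
Proof.
move=> p0 spq; have d0 : q %/ p != 0.
  by rewrite -size_poly_eq0 size_divp // -lt0n subn_gt0 prednK ?size_poly_gt0.
rewrite [in RHS](divp_eq q p) lead_coefDl ?lead_coefM //.
rewrite size_mul //; apply: leq_trans (_ : size p <= _)%N.
  by rewrite ltn_modp.
by move: d0 p0; rewrite -!size_poly_gt0; move: (size (q %/ p)) (size p); lia.
Qed.

Lemma divp_linear (F : fieldType) (p q : {poly F}) :
  p != 0 -> size q = (size p).+1 ->
  q %/ p = (lead_coef q / lead_coef p) *: 'X + ((q %/ p)`_0)%:P.
Proof.
move=> p0 sq; have sd : size (q %/ p) = 2.
  by rewrite size_divp // sq; move: p0; rewrite -size_poly_gt0; move: (size p); lia.
have <- : lead_coef (q %/ p) = lead_coef q / lead_coef p.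
  by rewrite -(lead_coef_divp_mul p0) ?sq // mulfK ?lead_coef_eq0.
apply/polyP => -[|[|i]]; rewrite coefD coefZ coefX coefC /= ?mulr0 ?mulr1 ?addr0 ?add0r //.
  by rewrite /lead_coef sd.
by rewrite nth_default // sd.
Qed.

Section ComplexModulus.
Variable R : rcfType.
Implicit Types (x : R) (z r : R[i]).

Lemma normc_ge0 z : 0 <= normc z.
Proof. by case: z => a b; rewrite sqrtr_ge0. Qed.

Lemma normcE z : `|z| = (normc z)%:C.
Proof. by rewrite normc_def; case: z. Qed.

Lemma Re_le_normc z : complex.Re z <= normc z.
Proof.
case: z => a b /=; apply: le_trans (ler_norm a) _.
by rewrite -sqrtr_sqr ler_wsqrtr // lerDl sqr_ge0.
Qed.

Lemma normc_real x : normc x%:C = `|x|.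
Proof. by rewrite /= expr0n /= addr0 sqrtr_sqr. Qed.

Lemma normc_linear_ge (a b : R) z : 0 <= a -> 0 <= complex.Re z ->
  b <= normc (a%:C * z + b%:C).
Proof.
move=> a_ge0 Rez_ge0; apply: le_trans (Re_le_normc _) => /=.
by case: z Rez_ge0 => x y /= x_ge0; rewrite mul0r subr0 lerDr mulr_ge0.
Qed.

(* Both -Re r and |z| - |r| are lower bounds for |z - r|; adding 1 + |r| times
   the first to -Re r times the second yields the constant. *)
Lemma normc_sub_ge r : complex.Re r < 0 ->
  exists2 c : R, 0 < c &
    forall z, 0 <= complex.Re z -> c * (1 + normc z) <= normc (z - r).
Proof.
move=> r_lt0; set A := 1 + normc r - complex.Re r.
have A_gt0 : 0 < A by have := normc_ge0 r; rewrite /A; lra.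
exists (- complex.Re r / A); first by rewrite divr_gt0 // oppr_gt0.
move=> z z_ge0; rewrite mulrAC ler_pdivrMr //.
have Re_zr := Re_le_normc (z - r); rewrite raddfB /= in Re_zr.
have tri : normc z <= normc (z - r) + normc r by have := le_normcD (z - r) r; rewrite subrK.
have := normc_ge0 r; have := normc_ge0 z; rewrite /A; nra.
Qed.

Lemma prod_normc_sub_ge (s : seq R[i]) : {in s, forall r, complex.Re r < 0} ->
  exists2 c : R, 0 < c & forall z, 0 <= complex.Re z ->
    c * (1 + normc z) ^+ size s <= \prod_(r <- s) normc (z - r).
Proof.
elim: s => [|r s IHs] s_lt0; first by exists 1 => // z _; rewrite big_nil mulr1.
have /IHs[c c_gt0 Hc] : {in s, forall r, complex.Re r < 0}.
  by move=> w ws; apply: s_lt0; rewrite in_cons ws orbT.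
have /normc_sub_ge[d d_gt0 Hd] := s_lt0 r (mem_head r s).
exists (d * c) => [|z z_ge0]; first exact: mulr_gt0.
have u_ge0 : 0 <= 1 + normc z by rewrite addr_ge0 ?normc_ge0.
rewrite big_cons exprS mulrACA.
apply: ler_pM; [exact: mulr_ge0 (ltW d_gt0) u_ge0 | | exact: Hd | exact: Hc].
exact: mulr_ge0 (ltW c_gt0) (exprn_ge0 _ u_ge0).
Qed.

Lemma normc_horner_le n (p : {poly R[i]}) : (size p <= n.+1)%N ->
  exists2 K : R, 0 <= K & forall z, normc p.[z] <= K * (1 + normc z) ^+ n.
Proof.
move=> sp; exists (\sum_(i < n.+1) normc p`_i) => [|z].
  by rewrite sumr_ge0 // => i _; apply: normc_ge0.
rewrite -lecR rmorphM rmorphXn rmorphD rmorph1 rmorph_sum /= -!normcE.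
under eq_bigr do rewrite -normcE.
exact: normr_horner_le.
Qed.

End ComplexModulus.

Lemma stable_horner_ge (R : realType) (p : {poly R}) : p != 0 -> stable p ->
  exists2 c : R, 0 < c & forall z, 0 <= complex.Re z ->
    c * (1 + normc z) ^+ (size p).-1 <= normc (map_poly (real_complex R) p).[z].
Proof.
move=> p_neq0 p_stable; set pC := map_poly _ p.
have [s p_split] := closed_field_poly_normal pC.
have lpC_neq0 : lead_coef pC != 0 by rewrite lead_coef_eq0 map_poly_eq0.
have Re_s : {in s, forall r, complex.Re r < 0}.
  by move=> r rs; apply: p_stable; rewrite -/pC p_split rootZ // root_prod_XsubC.
have [c c_gt0 Hc] := prod_normc_sub_ge Re_s.
have lpC_gt0 : 0 < normc (lead_coef pC).
  by rewrite lead_coef_map normc_real normr_gt0 lead_coef_eq0.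
exists (normc (lead_coef pC) * c) => [|z Rez_ge0]; first exact: mulr_gt0.
have -> : (size p).-1 = size s.
  by rewrite -(size_map_poly (real_complex R)) -/pC p_split size_scale // size_prod_XsubC.
rewrite [in X in _ <= X]p_split hornerZ horner_prod Normc.normcM -mulrA.
apply: ler_wpM2l; first exact: ltW.
rewrite (big_morph _ (@Normc.normcM _) (@Normc.normc1 _)).
by under eq_bigr do rewrite hornerXsubC; exact: Hc.
Qed.

Theorem eventually_stable_add_scale (R : realType) n (p q : {poly R}) :
  size p = n.+2 -> 0 < lead_coef p -> stable p ->
  size q = n.+3 -> 0 < lead_coef q ->
  exists psi0 : R, forall psi : R, psi0 < psi -> stable (q + psi *: p).
Proof.
move=> sp lp_gt0 p_stable sq lq_gt0; set pC := map_poly (real_complex R) p.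
have p_neq0 : p != 0 by rewrite -size_poly_eq0 sp.
set a := lead_coef q / lead_coef p; set b := (q %/ p)`_0; set rho := q %% p.
have q_eq : q = (a *: 'X + b%:P) * p + rho by rewrite -divp_linear ?sp ?sq // -divp_eq.
have a_ge0 : 0 <= a by rewrite divr_ge0 ?ltW.
clearbody a.
have [c c_gt0 p_ge] := stable_horner_ge p_neq0 p_stable; rewrite sp /= in p_ge.
have s_rhoC : (size (map_poly (real_complex R) rho) <= n.+1)%N.
  by rewrite size_map_poly -ltnS -sp ltn_modp.
have [K K_ge0 rho_le] := normc_horner_le s_rhoC.
exists (K / c - b) => psi psi_gt z /eqP root_z; rewrite ltNge; apply/negP => Rez_ge0.
have root_eq : (a%:C * z + (b + psi)%:C) * pC.[z] = - (map_poly (real_complex R) rho).[z].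
  apply/eqP; rewrite -addr_eq0 -root_z q_eq.
  rewrite !(rmorphD, rmorphM) /= !map_polyZ map_polyX map_polyC -/pC !hornerE /=.
  by apply/eqP; ring.
set u := 1 + normc z; have u_ge1 : 1 <= u by rewrite lerDl normc_ge0.
have bound : (b + psi) * c * u <= K.
  rewrite -(ler_pM2r (exprn_gt0 n (lt_le_trans ltr01 u_ge1))).
  apply: le_trans (rho_le z); rewrite -normcN -root_eq Normc.normcM -!mulrA -exprS.
  apply: le_trans (ler_wpM2r _ (normc_linear_ge _ a_ge0 Rez_ge0))
                  (ler_wpM2l (normc_ge0 _) (p_ge z Rez_ge0)).
  exact: mulr_ge0 (ltW c_gt0) (exprn_ge0 _ (le_trans ler01 u_ge1)).
rewrite ltrBlDr ltr_pdivrMr // [psi + b]addrC in psi_gt.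
move: bound psi_gt; set X := (b + psi) * c; nra.
Qed.

Theorem lemma1 (R : realType) (Z3 Z4 : {poly R}) :
  size Z3 = 4%N -> 0 < lead_coef Z3 -> stable Z3 ->
  size Z4 = 5%N -> 0 < lead_coef Z4 ->
  exists psi0 : R, forall psi : R, psi0 < psi -> stable (Z4 + psi *: Z3).
Proof. exact: eventually_stable_add_scale. Qed.
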